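(* Let $G$ be a torsion-free group and let $S=\bigoplus_{g\in G}S_g$ be an epsilon-strongly $G$-graded ring with principal component $R=S_e$. Then $S$ is left (respectively right) artinian if and only if $R$ is left (respectively right) artinian and $S_g=\{0\}$ for all but finitely many $g\in G$.
   Context: All rings are associative with multiplicative identity $1\neq 0$. A ring $S$ is $G$-graded if $S=\bigoplus_{g\in G}S_g$ for additive subgroups $S_g$ with $S_gS_h\subseteq S_{gh}$ for all $g,h\in G$; $S_e$ ($e$ the neutral element) is the principal component. $S$ is epsilon-strongly $G$-graded if (a) $S_gS_{g^{-1}}S_g=S_g$ for all $g\in G$, and (b) for each $g\in G$ the ideal $S_gS_{g^{-1}}$ of $S_e$ has a multiplicative identity. *)

From HB Require Import structures.
From mathcomp Require Import all_boot all_order all_algebra.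
Set Implicit Arguments. Unset Strict Implicit. Unset Printing Implicit Defensive.
Import GRing.Theory.

Section Defs.
Variable G : groupType.
Variable S : nzRingType.
Local Open Scope ring_scope.

Definition torsion_free : Prop :=
  forall (g : G) (n : nat), (0 < n)%N -> (g ^+ n)%g = 1%g -> g = 1%g.

Definition add_subgroup (A : S -> Prop) : Prop :=
  A 0 /\ forall x y, A x -> A y -> A (x - y).

(* A B : the additive subgroup generated by products a b, i.e. finite sums *)
Definition prod2 (A B : S -> Prop) : S -> Prop := fun x =>
  exists l : seq (S * S),
    (forall p, p \in l -> A p.1 /\ B p.2) /\
    x = \sum_(p <- l) p.1 * p.2.

Definition prod3 (A B C : S -> Prop) : S -> Prop := fun x =>
  exists l : seq (S * S * S),
    (forall p, p \in l -> [/\ A p.1.1, B p.1.2 & C p.2]) /\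
    x = \sum_(p <- l) p.1.1 * p.1.2 * p.2.

Definition direct_sum (Sg : G -> S -> Prop) : Prop :=
  (forall x : S, exists (l : seq G) (f : G -> S),
      [/\ uniq l, forall g, Sg g (f g) & x = \sum_(g <- l) f g]) /\
  (forall (l : seq G) (f : G -> S), uniq l ->
      (forall g, g \in l -> Sg g (f g)) ->
      \sum_(g <- l) f g = 0 -> forall g, g \in l -> f g = 0).

Definition graded (Sg : G -> S -> Prop) : Prop :=
  [/\ forall g, add_subgroup (Sg g),
      direct_sum Sg &
      forall (g h : G) (x y : S), Sg g x -> Sg h y -> Sg (g * h)%g (x * y)].

Definition epsilon_strongly_graded (Sg : G -> S -> Prop) : Prop :=
  graded Sg /\
  forall g : G,
    (forall x, prod3 (Sg g) (Sg (g^-1)%g) (Sg g) x <-> Sg g x) /\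
    exists u, prod2 (Sg g) (Sg (g^-1)%g) u /\
      forall x, prod2 (Sg g) (Sg (g^-1)%g) x -> u * x = x /\ x * u = x.

(* left / right ideals of the subring P of S (P = fun _ => True for S itself) *)
Definition left_ideal_of (P I : S -> Prop) : Prop :=
  [/\ forall x, I x -> P x, I 0, (forall x y, I x -> I y -> I (x - y)) &
      forall r x, P r -> I x -> I (r * x)].

Definition right_ideal_of (P I : S -> Prop) : Prop :=
  [/\ forall x, I x -> P x, I 0, (forall x y, I x -> I y -> I (x - y)) &
      forall r x, P r -> I x -> I (x * r)].

Definition left_artinian_on (P : S -> Prop) : Prop :=
  forall I : nat -> S -> Prop,
    (forall n, left_ideal_of P (I n)) ->
    (forall n x, I n.+1 x -> I n x) ->
    exists N, forall n, (N <= n)%N -> forall x, I n x <-> I N x.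

Definition right_artinian_on (P : S -> Prop) : Prop :=
  forall I : nat -> S -> Prop,
    (forall n, right_ideal_of P (I n)) ->
    (forall n x, I n.+1 x -> I n x) ->
    exists N, forall n, (N <= n)%N -> forall x, I n x <-> I N x.

Definition left_artinian : Prop := left_artinian_on (fun _ => True).
Definition right_artinian : Prop := right_artinian_on (fun _ => True).

Definition finite_support (Sg : G -> S -> Prop) : Prop :=
  exists l : seq G, forall g, (exists x, Sg g x /\ x <> 0) -> g \in l.

End Defs.

From HB Require Import structures.
From mathcomp Require Import all_boot all_order all_algebra.
From mathcomp Require Import ring.
From Stdlib Require Import ClassicalEpsilon Classical.
Set Implicit Arguments. Unset Strict Implicit. Unset Printing Implicit Defensive.
Import GRing.Theory.
Local Open Scope ring_scope.

(* If [R = S_1] is left artinian and [S_g = 0] outside a finite set of degrees,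
   then [S] is a finitely generated left [R]-module: writing
   [eps (g^-1) = sum a_i b_i] with [a_i] in [S_(g^-1)] and [b_i] in [S_g],
   every [s] in [S_g] equals [s eps (g^-1) = sum (s a_i) b_i]. Hence [S] is
   left artinian. Conversely a left ideal [I] of [R] is recovered from [S I] by
   taking degree-one components, so [R] inherits the chain condition from [S].

   For the finiteness of the support, torsion-freeness makes [1 + x] right
   regular for every homogeneous [x] of degree [k <> 1], and the chain
   [S (1 + x)^n] then forces [x] to be nilpotent; consequently [Y X X = X] with
   [X] homogeneous of nontrivial degree implies [X = 0]. If infinitely many
   [S_g] were nonzero, the chain condition in [R] gives a primitive idempotent
   [e] with [eps (h^-1) e = e] for infinitely many [h]. The corner ring [eRe]
   is local, which yields [p_h] in [S_h] and [q_h] in [S_(h^-1)] with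
   [q_h p_h = e]. For distinct such [h_0, h_1, ...], the left ideals [I_n] of
   [R] formed by the [r] such that no [e y r x e] with [x] in [S_(h_i)], [y] in
   [S_(h_i^-1)], [i < n], is left invertible in [eRe] form a chain that does not
   stabilise: [p_(h_n) q_(h_n)] lies in [I_n] but not in [I_(n+1)].

   The right-handed statement is the left-handed one for the opposite ring,
   graded by [g |-> S_(g^-1)]. *)

Section FiniteSumsOfProducts.
Variable S : nzRingType.
Implicit Types A B : S -> Prop.

Lemma prod2_mul A B a b : A a -> B b -> prod2 A B (a * b).
Proof.
move=> ha hb; exists [:: (a, b)]; split; last by rewrite big_seq1.
by move=> p; rewrite inE => /eqP ->.
Qed.

Lemma prod20 A B : prod2 A B 0.
Proof. by exists [::]; split => //; rewrite big_nil. Qed.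

Lemma prod2D A B x y : prod2 A B x -> prod2 A B y -> prod2 A B (x + y).
Proof.
move=> [l1 [H1 ->]] [l2 [H2 ->]]; exists (l1 ++ l2); split; last by rewrite big_cat.
by move=> p; rewrite mem_cat => /orP [/H1|/H2].
Qed.

Lemma prod2_mull A B r x : (forall a, A a -> A (r * a)) ->
  prod2 A B x -> prod2 A B (r * x).
Proof.
move=> HA [l [H ->]]; exists [seq (r * p.1, p.2) | p <- l]; split.
  by move=> p /mapP [q ql ->] /=; have [h1 h2] := H q ql; split => //; apply: HA.
by rewrite big_map mulr_sumr; apply: eq_bigr => p _ /=; rewrite mulrA.
Qed.

Lemma prod2_mulr A B r x : (forall b, B b -> B (b * r)) ->
  prod2 A B x -> prod2 A B (x * r).
Proof.
move=> HB [l [H ->]]; exists [seq (p.1, p.2 * r) | p <- l]; split.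
  by move=> p /mapP [q ql ->] /=; have [h1 h2] := H q ql; split => //; apply: HB.
by rewrite big_map mulr_suml; apply: eq_bigr => p _ /=; rewrite mulrA.
Qed.

Lemma prod2_ind A B (P : S -> Prop) : P 0 -> (forall x y, P x -> P y -> P (x + y)) ->
  (forall a b, A a -> B b -> P (a * b)) -> forall x, prod2 A B x -> P x.
Proof.
move=> P0 PD PM x [l [H ->]]; elim: l H => [|p l IH] H; first by rewrite big_nil.
rewrite big_cons; apply: PD; first by have [] := H p (mem_head _ _); apply: PM.
by apply: IH => q ql; apply: H; rewrite inE ql orbT.
Qed.

Lemma prod2S A B B' x : (forall y, B y -> B' y) -> prod2 A B x -> prod2 A B' x.
Proof.
move=> HB [l [H ->]]; exists l; split => // p pl.
by have [h1 h2] := H p pl; split => //; apply: HB.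
Qed.

End FiniteSumsOfProducts.

Lemma sum_mem_uniq_sub (V : nmodType) (T : eqType) (l L : seq T) (f : T -> V) :
  uniq l -> uniq L -> {subset l <= L} ->
  \sum_(g <- L) (if g \in l then f g else 0) = \sum_(g <- l) f g.
Proof.
move=> ul uL sub; rewrite -big_mkcond -big_filter; apply: perm_big.
apply: uniq_perm => [||g]; rewrite ?filter_uniq // mem_filter.
by case gl: (g \in l) => //=; rewrite (sub _ gl).
Qed.

Section GradedRing.
Variables (G : groupType) (S : nzRingType) (Sg : G -> S -> Prop).
Hypothesis Sg_graded : graded Sg.

Lemma Sg0 g : Sg g 0.
Proof. by case: Sg_graded => H _ _; case: (H g). Qed.

Lemma SgB g x y : Sg g x -> Sg g y -> Sg g (x - y).
Proof. by case: Sg_graded => H _ _; case: (H g) => _; apply. Qed.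

Lemma SgN g x : Sg g x -> Sg g (- x).
Proof. by move=> hx; rewrite -sub0r; apply: SgB => //; apply: Sg0. Qed.

Lemma SgD g x y : Sg g x -> Sg g y -> Sg g (x + y).
Proof. by move=> hx hy; rewrite -[y]opprK; apply: SgB => //; apply: SgN. Qed.

Lemma SgM g h x y : Sg g x -> Sg h y -> Sg (g * h)%g (x * y).
Proof. by case: Sg_graded => _ _; apply. Qed.

Lemma Sg1M x y : Sg 1%g x -> Sg 1%g y -> Sg 1%g (x * y).
Proof. by move=> hx hy; rewrite -(mulg1 1%g); apply: SgM. Qed.

Lemma graded_decomp x : exists p : seq G * (G -> S),
  [/\ uniq p.1, forall g, Sg g (p.2 g) & x = \sum_(g <- p.1) p.2 g].
Proof.
by case: Sg_graded => _ [H _] _; have [l [f Hlf]] := H x; exists (l, f).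
Qed.

Lemma graded_indep (l : seq G) (f : G -> S) : uniq l ->
  (forall g, g \in l -> Sg g (f g)) ->
  \sum_(g <- l) f g = 0 -> forall g, g \in l -> f g = 0.
Proof. by case: Sg_graded => _ [_ H] _; apply: H. Qed.

Definition hdecomp (x : S) : {p : seq G * (G -> S) |
    [/\ uniq p.1, forall g, Sg g (p.2 g) & x = \sum_(g <- p.1) p.2 g]} :=
  constructive_indefinite_description _ (graded_decomp x).

Definition hcomp (h : G) (x : S) : S :=
  if h \in (sval (hdecomp x)).1 then (sval (hdecomp x)).2 h else 0.

Lemma hcompE x (l : seq G) (f : G -> S) h : uniq l ->
  (forall g, g \in l -> Sg g (f g)) ->
  x = \sum_(g <- l) f g -> hcomp h x = if h \in l then f h else 0.
Proof.
move=> ul Hf ex; rewrite /hcomp; case: (hdecomp x) => [[l' f']] /= [ul' Hf' ex'].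
pose L := undup (l ++ l').
pose F g := (if g \in l then f g else 0) - (if g \in l' then f' g else 0).
have uL : uniq L by apply: undup_uniq.
have sumF : \sum_(g <- L) F g = 0.
  have s1 : {subset l <= L} by move=> g gl; rewrite mem_undup mem_cat gl.
  have s2 : {subset l' <= L} by move=> g gl; rewrite mem_undup mem_cat gl orbT.
  rewrite big_split /= sumrN !sum_mem_uniq_sub //.
  by rewrite -ex -ex' subrr.
have SgF g : g \in L -> Sg g (F g).
  move=> _; apply: SgB; first by case: ifP => gl; [apply: Hf | apply: Sg0].
  by case: ifP => _; [apply: Hf' | apply: Sg0].
have F0 := graded_indep uL SgF sumF.
case hL: (h \in L); first by move/eqP: (F0 h hL); rewrite subr_eq0 => /eqP ->.
by move/negbT: hL; rewrite mem_undup mem_cat negb_or => /andP [/negbTE -> /negbTE ->].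
Qed.

Lemma hcomp_Sg h x : Sg h (hcomp h x).
Proof.
rewrite /hcomp; case: (hdecomp x) => [[l f]] /= [_ Hf _].
by case: ifP => _; [apply: Hf | apply: Sg0].
Qed.

Lemma hcomp_supp x : exists l : seq G,
  [/\ uniq l, forall h, h \notin l -> hcomp h x = 0 & x = \sum_(h <- l) hcomp h x].
Proof.
case: (hdecomp x) => [[l f]] /= [ul Hf ex].
have Ef h : hcomp h x = if h \in l then f h else 0 by apply: hcompE.
exists l; split => // [h hl|]; first by rewrite Ef (negbTE hl).
by rewrite {1}ex; apply: eq_big_seq => g gl; rewrite Ef gl.
Qed.

Lemma hcomp_sum x (L : seq G) : uniq L -> (forall h, h \notin L -> hcomp h x = 0) ->
  x = \sum_(h <- L) hcomp h x.
Proof.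
move=> uL HL; have [l [ul Hl ex]] := hcomp_supp x.
pose l2 := [seq g <- l | g \in L].
have ul2 : uniq l2 by apply: filter_uniq.
have s2L : {subset l2 <= L} by move=> g; rewrite mem_filter => /andP [].
have s2l : {subset l2 <= l} by move=> g; rewrite mem_filter => /andP [].
have -> : \sum_(h <- L) hcomp h x = \sum_(h <- L) (if h \in l2 then hcomp h x else 0).
  apply: eq_big_seq => h hL; rewrite mem_filter hL /=.
  by case: ifP => // /negbT /Hl.
rewrite sum_mem_uniq_sub // {1}ex -(sum_mem_uniq_sub (fun h => hcomp h x) ul2 ul s2l).
apply: eq_big_seq => g gl; rewrite mem_filter gl andbT.
by case: ifP => // /negbT /HL.
Qed.

Lemma hcomp_eq0 x : (forall h, hcomp h x = 0) -> x = 0.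
Proof.
move=> H; have [l [_ _ ->]] := hcomp_supp x.
by rewrite big1_seq // => h _; apply: H.
Qed.

Lemma hcompD h x y : hcomp h (x + y) = hcomp h x + hcomp h y.
Proof.
have [lx [ux Hx ex]] := hcomp_supp x.
have [ly [uy Hy ey]] := hcomp_supp y.
pose L := undup (lx ++ ly).
have uL : uniq L by apply: undup_uniq.
pose F g := (if g \in lx then hcomp g x else 0) + (if g \in ly then hcomp g y else 0).
have eF : x + y = \sum_(g <- L) F g.
  have s1 : {subset lx <= L} by move=> g gl; rewrite mem_undup mem_cat gl.
  have s2 : {subset ly <= L} by move=> g gl; rewrite mem_undup mem_cat gl orbT.
  by rewrite big_split /= (sum_mem_uniq_sub _ ux uL s1) (sum_mem_uniq_sub _ uy uL s2) -ex -ey.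
have SgF g : g \in L -> Sg g (F g).
  by move=> _; apply: SgD; case: ifP => _; (apply: hcomp_Sg || apply: Sg0).
have Ex : (if h \in lx then hcomp h x else 0) = hcomp h x by case: ifP => // /negbT /Hx ->.
have Ey : (if h \in ly then hcomp h y else 0) = hcomp h y by case: ifP => // /negbT /Hy ->.
rewrite (hcompE h uL SgF eF) /F Ex Ey; case: ifP => // /negbT.
by rewrite mem_undup mem_cat negb_or => /andP [/Hx -> /Hy ->]; rewrite addr0.
Qed.

Lemma hcomp0 h : hcomp h 0 = 0.
Proof. by apply: (@addrI _ (hcomp h 0)); rewrite -hcompD !addr0. Qed.

Lemma hcomp_homog g x h : Sg g x -> hcomp h x = if h == g then x else 0.
Proof.
move=> hx; rewrite (@hcompE x [:: g] (fun _ => x)) ?inE ?big_seq1 //.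
by move=> g'; rewrite inE => /eqP ->.
Qed.

Lemma hcomp_mulr k x y h : Sg k y -> hcomp h (x * y) = hcomp (h * k^-1)%g x * y.
Proof.
move=> hy; have [l [ul Hl ex]] := hcomp_supp x.
pose L := [seq (g * k)%g | g <- l].
have inj : injective (fun g : G => (g * k)%g) by apply: mulIg.
have uL : uniq L by rewrite map_inj_uniq.
pose F g := hcomp (g * k^-1)%g x * y.
have eF : x * y = \sum_(g <- L) F g.
  by rewrite big_map {1}ex mulr_suml; apply: eq_bigr => g _; rewrite /F mulgK.
have SgF g : g \in L -> Sg g (F g).
  by move=> _; rewrite -{1}[g](mulgVK k); apply: SgM => //; apply: hcomp_Sg.
rewrite (hcompE h uL SgF eF) /F.
have -> : (h \in L) = ((h * k^-1)%g \in l) by rewrite -[in RHS](mem_map inj) /= mulgVK.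
by case: ifP => // /negbT /Hl ->; rewrite mul0r.
Qed.

Lemma hcomp_mull k x y h : Sg k y -> hcomp h (y * x) = y * hcomp (k^-1 * h)%g x.
Proof.
move=> hy; have [l [ul Hl ex]] := hcomp_supp x.
pose L := [seq (k * g)%g | g <- l].
have inj : injective (fun g : G => (k * g)%g) by apply: mulgI.
have uL : uniq L by rewrite map_inj_uniq.
pose F g := y * hcomp (k^-1 * g)%g x.
have eF : y * x = \sum_(g <- L) F g.
  by rewrite big_map {1}ex mulr_sumr; apply: eq_bigr => g _; rewrite /F mulKg.
have SgF g : g \in L -> Sg g (F g).
  by move=> _; rewrite -{1}[g](mulVKg k); apply: SgM => //; apply: hcomp_Sg.
rewrite (hcompE h uL SgF eF) /F.
have -> : (h \in L) = ((k^-1 * h)%g \in l) by rewrite -[in RHS](mem_map inj) /= mulVKg.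
by case: ifP => // /negbT /Hl ->; rewrite mulr0.
Qed.

(* [hcomp 1 1] is a right identity, as it acts as one on homogeneous elements. *)
Lemma Sg1_1 : Sg 1%g 1.
Proof.
set u := hcomp 1%g 1.
have homog_u g s : Sg g s -> s * u = s.
  by move=> hs; have := hcomp_mull 1 g hs; rewrite mulr1 (hcomp_homog g hs) eqxx mulVg.
have mul_u x : x * u = x.
  have [l [ul Hl ex]] := hcomp_supp x.
  rewrite {2}ex {1}ex mulr_suml; apply: eq_bigr => g _.
  by apply: (homog_u g); apply: hcomp_Sg.
by rewrite -[1](mul_u) mul1r; apply: hcomp_Sg.
Qed.

End GradedRing.

Lemma prod2_Sg (G : groupType) (S : nzRingType) (Sg : G -> S -> Prop) g h x :
  graded Sg -> prod2 (Sg g) (Sg h) x -> Sg (g * h)%g x.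
Proof.
move=> Sg_gr; apply: prod2_ind; first exact: Sg0.
  by move=> a b ha hb; apply: SgD.
by move=> a b ha hb; apply: SgM.
Qed.

Section EpsilonStronglyGraded.
Variables (G : groupType) (S : nzRingType) (Sg : G -> S -> Prop).
Hypothesis Sg_eps : epsilon_strongly_graded Sg.

Lemma eps_graded : graded Sg. Proof. by case: Sg_eps. Qed.
Let Sg_graded := eps_graded.

Definition eps (g : G) : S :=
  sval (constructive_indefinite_description _ (proj2 (proj2 Sg_eps g))).

Lemma eps_spec g : prod2 (Sg g) (Sg g^-1) (eps g) /\
   forall x, prod2 (Sg g) (Sg g^-1) x -> eps g * x = x /\ x * eps g = x.
Proof. by rewrite /eps; case: (constructive_indefinite_description _ _). Qed.

Lemma eps_Sg1 g : Sg 1%g (eps g).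
Proof. by rewrite -(mulgV g); apply: prod2_Sg => //; case: (eps_spec g). Qed.

Lemma eps_idem g : eps g * eps g = eps g.
Proof. by have [h1 h2] := eps_spec g; case: (h2 _ h1). Qed.

(* [S_g = S_g S_g^-1 S_g], and [eps g^-1] is a right identity of [S_g^-1 S_g]. *)
Lemma homog_mul_eps g s : Sg g s -> s * eps g^-1 = s.
Proof.
case/(proj2 (proj1 (proj2 Sg_eps g) s)) => l [H ->].
rewrite mulr_suml; apply: eq_big_seq => p pl.
have [h1 h2 h3] := H p pl; rewrite -!mulrA; congr (_ * _).
have h3' : Sg (g^-1)^-1 p.2 by rewrite invgK.
by have [_ e] := proj2 (eps_spec g^-1) _ (prod2_mul h2 h3'); rewrite mulrA e.
Qed.

Lemma eps_central g r : Sg 1%g r -> r * eps g = eps g * r.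
Proof.
move=> hr; have [h1 h2] := eps_spec g.
have p1 : prod2 (Sg g) (Sg g^-1) (r * eps g).
  by apply: prod2_mull h1 => a ha; rewrite -[g]mul1g; apply: SgM.
have p2 : prod2 (Sg g) (Sg g^-1) (eps g * r).
  by apply: prod2_mulr h1 => b hb; rewrite -[(g^-1)%g]mulg1; apply: SgM.
by have [e1 _] := h2 _ p1; have [_ e2] := h2 _ p2; rewrite -e1 mulrA e2.
Qed.

Lemma eps_decomp g : exists l : seq (S * S),
  (forall p, p \in l -> Sg g p.1 /\ Sg g^-1 p.2) /\ eps g = \sum_(p <- l) p.1 * p.2.
Proof. by case: (eps_spec g) => [[l H] _]; exists l. Qed.

Lemma eps_neq0 g x : Sg g x -> x <> 0 -> eps g^-1 <> 0.
Proof. by move=> hx nx e; apply: nx; rewrite -(homog_mul_eps hx) e mulr0. Qed.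

End EpsilonStronglyGraded.

Lemma chain_le (T : Type) (I : nat -> T -> Prop) :
  (forall n x, I n.+1 x -> I n x) -> forall m n x, (m <= n)%N -> I n x -> I m x.
Proof.
move=> H m n x /subnK <-; elim: (n - m)%N => [|k IH] //= hx.
by apply: IH; apply: H; rewrite addSn in hx.
Qed.

Lemma left_idealD (S : nzRingType) (P I : S -> Prop) x y :
  left_ideal_of P I -> I x -> I y -> I (x + y).
Proof.
move=> [_ I0 IB _] hx hy; rewrite -[y]opprK -[- y]sub0r.
by apply: (IB) => //; apply: IB.
Qed.

Section PrincipalComponent.
Variables (G : groupType) (S : nzRingType) (Sg : G -> S -> Prop).
Hypothesis Sg_graded : graded Sg.
Local Notation R := (Sg 1%g).

(* The extension [S I] of a left ideal [I] of [R] contracts back to [I]: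
   the degree-one component of [s a] with [a] in [I] is [hcomp 1 s * a]. *)
Lemma contract_extended_ideal (I : S -> Prop) : left_ideal_of R I ->
  forall x, R x -> prod2 (fun _ => True) I x -> I x.
Proof.
move=> HI x hx px; rewrite -(_ : hcomp Sg_graded 1%g x = x); last first.
  by rewrite (hcomp_homog _ 1%g hx) eqxx.
move: px; apply: (@prod2_ind _ _ _ (fun y => I (hcomp Sg_graded 1%g y))) => [||a b _ hb].
- by rewrite hcomp0; case: HI.
- by move=> a b ha hb; rewrite hcompD; apply: (left_idealD HI).
have [IR _ _ IM] := HI.
rewrite (hcomp_mulr _ a 1%g (IR _ hb)) mul1g invg1.
by apply: IM => //; apply: hcomp_Sg.
Qed.

Lemma left_artinian_principal : left_artinian S -> left_artinian_on R.
Proof.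
move=> HS I HI Hd.
pose J n := prod2 (fun _ : S => True) (I n).
have HJ n : left_ideal_of (fun _ => True) (J n).
  split => //; first exact: prod20.
    by move=> x y hx hy; apply: prod2D => //; rewrite -mulN1r; apply: prod2_mull.
  by move=> r x _ hx; apply: prod2_mull.
have HJd n x : J n.+1 x -> J n x by apply: prod2S; apply: Hd.
have [N HN] := HS J HJ HJd.
exists N => n hn x; split; first exact: chain_le.
move=> hx; have [IR _ _ _] := HI N.
apply: contract_extended_ideal => //; first exact: IR.
by apply/(HN n hn); rewrite /J -[x]mul1r; apply: prod2_mul.
Qed.

End PrincipalComponent.

Definition is_subring (S : nzRingType) (R : S -> Prop) :=
  [/\ R 1, forall x y, R x -> R y -> R (x - y) & forall x y, R x -> R y -> R (x * y)].

Lemma Sg1_subring (G : groupType) (S : nzRingType) (Sg : G -> S -> Prop) :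
  graded Sg -> is_subring (Sg 1%g).
Proof. by move=> Sg_gr; split; [exact: Sg1_1 | exact: SgB | exact: Sg1M]. Qed.

Section Subring.
Variables (S : nzRingType) (R : S -> Prop).
Hypothesis R_subring : is_subring R.

Lemma subring1 : R 1. Proof. by case: R_subring. Qed.

Lemma subringB x y : R x -> R y -> R (x - y).
Proof. by case: R_subring => _ RB _; apply: RB. Qed.

Lemma subringM x y : R x -> R y -> R (x * y).
Proof. by case: R_subring => _ _ RM; apply: RM. Qed.

Lemma subring0 : R 0. Proof. by rewrite -(subrr 1); apply: subringB; apply: subring1. Qed.

Lemma subringN x : R x -> R (- x).
Proof. by move=> h; rewrite -sub0r; apply: subringB => //; apply: subring0. Qed.

Lemma subringD x y : R x -> R y -> R (x + y).
Proof. by move=> hx hy; rewrite -[y]opprK; apply: subringB => //; apply: subringN. Qed.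

Lemma subring_int (c : int) : R c%:~R.
Proof.
have Rnat n : R n%:R.
  by elim: n => [|n IH]; [apply: subring0 | rewrite mulrS; apply: subringD => //; apply: subring1].
case: c => n; first by rewrite -pmulrn.
by rewrite NegzE mulrNz; apply: subringN; rewrite -pmulrn.
Qed.

Fixpoint lspan (D : seq S) (x : S) : Prop :=
  if D is d :: D' then exists r m, [/\ R r, lspan D' m & x = r * d + m] else x = 0.

Lemma lspan0 D : lspan D 0.
Proof.
elim: D => [|d D IH] //=; exists 0, 0.
by split => //; [apply: subring0 | rewrite mul0r addr0].
Qed.

Lemma lspanB D x y : lspan D x -> lspan D y -> lspan D (x - y).
Proof.
elim: D x y => [|d D IH] x y /=; first by move=> -> ->; rewrite subrr.
move=> [r [m [hr hm ->]]] [r' [m' [hr' hm' ->]]].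
exists (r - r'), (m - m'); split; [exact: subringB | exact: IH|].
by rewrite mulrBl opprD addrACA.
Qed.

Lemma lspanD D x y : lspan D x -> lspan D y -> lspan D (x + y).
Proof.
move=> hx hy; rewrite -[y]opprK -[- y]sub0r.
by apply: lspanB => //; apply: lspanB => //; apply: lspan0.
Qed.

Lemma lspanM D r x : R r -> lspan D x -> lspan D (r * x).
Proof.
elim: D x => [|d D IH] x hr /=; first by move=> ->; rewrite mulr0.
move=> [r1 [m [hr1 hm ->]]]; exists (r * r1), (r * m).
by split; [exact: subringM | exact: IH | rewrite mulrDr mulrA].
Qed.

Lemma lspan_catl D1 D2 x : lspan D1 x -> lspan (D1 ++ D2) x.
Proof.
elim: D1 x => [|d D IH] x /=; first by move=> ->; apply: lspan0.
by move=> [r [m [hr hm ->]]]; exists r, m; split => //; apply: IH.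
Qed.

Lemma lspan_catr D1 D2 x : lspan D2 x -> lspan (D1 ++ D2) x.
Proof.
elim: D1 x => [|d D IH] x //= hx; exists 0, x.
by split; [exact: subring0 | exact: IH | rewrite mul0r add0r].
Qed.

Lemma lspan_sum (I : eqType) D (r : seq I) (F : I -> S) :
  (forall i, i \in r -> lspan D (F i)) -> lspan D (\sum_(i <- r) F i).
Proof.
elim: r => [|a r IH] H; first by rewrite big_nil; apply: lspan0.
rewrite big_cons; apply: lspanD; first by apply: H; rewrite inE eqxx.
by apply: IH => i ir; apply: H; rewrite inE ir orbT.
Qed.

Lemma lspan_map2 (l : seq (S * S)) (c : S * S -> S) :
  (forall p, p \in l -> R (c p)) -> lspan [seq p.2 | p <- l] (\sum_(p <- l) c p * p.2).
Proof.
elim: l => [|p l IH] H /=; first by rewrite big_nil.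
rewrite big_cons; exists (c p), (\sum_(q <- l) c q * q.2); split => //.
  by apply: H; rewrite inE eqxx.
by apply: IH => q ql; apply: H; rewrite inE ql orbT.
Qed.

Definition lsubmod (N : S -> Prop) :=
  [/\ N 0, forall x y, N x -> N y -> N (x - y) & forall r x, R r -> N x -> N (r * x)].

Lemma lsubmodD N x y : lsubmod N -> N x -> N y -> N (x + y).
Proof.
move=> [N0 NB _] hx hy; rewrite -[y]opprK -[- y]sub0r.
by apply: (NB) => //; apply: NB.
Qed.

Definition lspan_artinian (D : seq S) := forall N : nat -> S -> Prop,
  (forall n, lsubmod (N n)) -> (forall n x, N n x -> lspan D x) ->
  (forall n x, N n.+1 x -> N n x) ->
  exists K, forall n, (K <= n)%N -> forall x, N n x <-> N K x.

Hypothesis R_artinian : left_artinian_on R.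

(* A chain in [lspan (d :: D)] stabilises once both the chain of its
   intersections with [lspan D] and the chain of left ideals of the
   [d]-coefficients of its elements do. *)
Lemma lspan_artinian_cons d D : lspan_artinian D -> lspan_artinian (d :: D).
Proof.
move=> IH N HN HM Hd.
pose A n x := N n x /\ lspan D x.
have HA n : lsubmod (A n).
  have [N0 NB NM] := HN n; split; first by split => //; apply: lspan0.
    by move=> x y [h1 h2] [h3 h4]; split; [apply: NB | apply: lspanB].
  by move=> r x hr [h1 h2]; split; [apply: NM | apply: lspanM].
have [K1 HK1] := IH A HA (fun n x hx => proj2 hx)
  (fun n x hx => conj (Hd _ _ (proj1 hx)) (proj2 hx)).
pose J n r := R r /\ exists m, lspan D m /\ N n (r * d + m).
have HJ n : left_ideal_of R (J n).
  have [N0 NB NM] := HN n; split; first by move=> x [].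
  - split; first exact: subring0.
    by exists 0; split; [apply: lspan0 | rewrite mul0r addr0].
  - move=> x y [hx [m [hm hxm]]] [hy [m' [hm' hym]]]; split; first exact: subringB.
    exists (m - m'); split; first exact: lspanB.
    by have := NB _ _ hxm hym; rewrite opprD addrACA mulrBl.
  - move=> r x hr [hx [m [hm hxm]]]; split; first exact: subringM.
    exists (r * m); split; first exact: lspanM.
    by have := NM _ _ hr hxm; rewrite mulrDr mulrA.
have HJd n x : J n.+1 x -> J n x.
  by move=> [hx [m [hm h]]]; split => //; exists m; split => //; apply: Hd.
have [K2 HK2] := R_artinian HJ HJd.
set K := maxn K1 K2; have hK1 : (K1 <= K)%N := leq_maxl _ _.
have hK2 : (K2 <= K)%N := leq_maxr _ _.
exists K => n hn x; split; first exact: chain_le.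
move=> hx; have /= [r [m [hr hm ex]]] := HM _ _ hx.
have [_ [m' [hm' hn']]] : J n r.
  apply/(HK2 n (leq_trans hK2 hn)); apply/(HK2 _ hK2).
  by split => //; exists m; split => //; rewrite -ex.
have hK : N K (r * d + m') by apply: (chain_le Hd) hn'.
have [hA _] : A n (m - m').
  apply/(HK1 n (leq_trans hK1 hn)); apply/(HK1 _ hK1); split; last exact: lspanB.
  have [_ NB _] := HN K.
  by have := NB _ _ hx hK; rewrite ex opprD addrACA subrr add0r.
rewrite ex (_ : r * d + m = (m - m') + (r * d + m')); last by rewrite addrCA subrK.
exact: lsubmodD (HN n) hA hn'.
Qed.

Lemma lspan_is_artinian D : lspan_artinian D.
Proof.
elim: D => [|d D IH]; last exact: lspan_artinian_cons.
move=> N HN HM _; exists 0%N => n _ x.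
by split => hx; have /= -> := HM _ _ hx; [case: (HN 0%N) | case: (HN n)].
Qed.

End Subring.

Section ArtinianOfFiniteSupport.
Variables (G : groupType) (S : nzRingType) (Sg : G -> S -> Prop).
Hypothesis Sg_eps : epsilon_strongly_graded Sg.
Let Sg_graded := eps_graded Sg_eps.
Local Notation R := (Sg 1%g).
Let R_subring := Sg1_subring Sg_graded.

Lemma homog_lspan (L : seq G) :
  exists D, forall g, g \in L -> forall s, Sg g s -> lspan R D s.
Proof.
elim: L => [|g L [D HD]]; first by exists [::].
have [l [Hl e]] := eps_decomp Sg_eps g^-1.
exists ([seq p.2 | p <- l] ++ D) => h; rewrite inE => /orP [/eqP -> s hs | hL s hs].
  apply: (lspan_catl R_subring); rewrite -(homog_mul_eps Sg_eps hs) e mulr_sumr.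
  under eq_bigr do rewrite mulrA.
  apply: lspan_map2 => p pl; rewrite -(mulgV g).
  by apply: SgM => //; case: (Hl p pl).
by apply: lspan_catr; [exact: R_subring | exact: HD hs].
Qed.

Lemma left_artinian_of_finite_support :
  left_artinian_on R -> finite_support Sg -> left_artinian S.
Proof.
move=> HR [l0 Hl0] I HI Hd.
have [D HD] := homog_lspan (undup l0).
have lspanD x : lspan R D x.
  rewrite (@hcomp_sum _ _ _ Sg_graded x (undup l0) (undup_uniq _)); last first.
    move=> h; rewrite mem_undup => hl; apply: NNPP => nz; apply/negP: hl.
    by rewrite Hl0 //; exists (hcomp Sg_graded h x); split => //; apply: hcomp_Sg.
  by apply: (lspan_sum R_subring) => h hl; apply: (HD h) => //; apply: hcomp_Sg.
apply: (lspan_is_artinian R_subring HR (D := D)) => // n.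
by have [_ I0 IB IM] := HI n; split => // r x _; apply: IM.
Qed.

End ArtinianOfFiniteSupport.

Section TorsionFree.
Variable G : groupType.
Hypothesis G_tf : torsion_free G.

Lemma expg_inj (k : G) : k != 1%g -> injective (fun m : nat => (k ^+ m)%g).
Proof.
move=> k1; suff H i j : (i <= j)%N -> (k ^+ i)%g = (k ^+ j)%g -> i = j.
  by move=> i j /= e; case: (leqP i j) => ij; [exact: H | apply/esym/H/esym/e/ltnW].
move=> ij; rewrite -(subnKC ij) expgnDr -{1}[(k ^+ i)%g]mulg1 => /mulgI /esym e.
case E: (j - i)%N => [|d]; first by rewrite addn0.
by rewrite E in e; move/eqP: (G_tf (ltn0Sn d) e); rewrite (negbTE k1).
Qed.

Lemma mul_expg_notin (l : seq G) (h k : G) : k != 1%g -> exists m, (h * k ^+ m)%g \notin l.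
Proof.
move=> k1; apply: NNPP => Hn.
have Hall m : (h * k ^+ m)%g \in l by apply: NNPP => hm; apply: Hn; exists m; apply/negP.
pose s := [seq (h * k ^+ m)%g | m <- iota 0 (size l).+1].
have us : uniq s by rewrite map_inj_uniq ?iota_uniq // => i j /mulgI; exact: expg_inj.
have sub : {subset s <= l} by move=> g /mapP [m _ ->].
by have := uniq_leq_size us sub; rewrite size_map size_iota ltnn.
Qed.

End TorsionFree.

Section NilpotentHomogeneous.
Variables (G : groupType) (S : nzRingType) (Sg : G -> S -> Prop).
Hypothesis Sg_graded : graded Sg.
Hypothesis G_tf : torsion_free G.
Local Notation hcomp := (hcomp Sg_graded).

(* Comparing components, [d (1 + x) = 0] propagates every component of [d]
   along the coset [h <k^-1>], which leaves the finite support of [d]. *)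
Lemma homog_1D_rreg k x d : k != 1%g -> Sg k x -> d * (1 + x) = 0 -> d = 0.
Proof.
move=> k1 hx e.
have E h : hcomp h d = hcomp (h * k^-1)%g d * (- x).
  have := f_equal (hcomp h) e.
  rewrite mulrDr mulr1 hcompD (hcomp_mulr _ _ _ hx) hcomp0 => /eqP.
  by rewrite addr_eq0 mulrN => /eqP.
have E2 m h : hcomp h d = hcomp (h * (k^-1) ^+ m)%g d * (- x) ^+ m.
  elim: m h => [|m IH] h; first by rewrite expg0 mulg1 expr0 mulr1.
  by rewrite IH E exprS mulrA expgSr mulgA.
apply: (@hcomp_eq0 _ _ _ Sg_graded d) => h.
have [l [_ Hl _]] := hcomp_supp Sg_graded d.
have [m hm] : exists m, (h * (k^-1) ^+ m)%g \notin l.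
  by apply: (mul_expg_notin G_tf); rewrite invg_eq1.
by rewrite (E2 m) (Hl _ hm) mul0r.
Qed.

Lemma homog_1DX_rreg k x d n : k != 1%g -> Sg k x -> d * (1 + x) ^+ n = 0 -> d = 0.
Proof.
move=> k1 hx; elim: n d => [|n IH] d; first by rewrite expr0 mulr1.
by rewrite exprSr mulrA => /(homog_1D_rreg k1 hx) /IH.
Qed.

(* The components of [c] along [<k>] are forced: [c_(k^m) = (-x)^m] and
   [c_(k^-m) = 0] for [m > 0]; finiteness of the support kills [x^m]. *)
Lemma homog_1D_linv_nilpotent k x c : k != 1%g -> Sg k x -> c * (1 + x) = 1 ->
  exists m, x ^+ m = 0.
Proof.
move=> k1 hx e.
have E h : hcomp h c + hcomp (h * k^-1)%g c * x = if h == 1%g then 1 else 0.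
  have := f_equal (hcomp h) e.
  by rewrite mulrDr mulr1 hcompD (hcomp_mulr _ _ _ hx) (hcomp_homog _ h (Sg1_1 Sg_graded)).
have E' h : h != 1%g -> hcomp h c = hcomp (h * k^-1)%g c * (- x).
  by move=> h1; move/eqP: (E h); rewrite (negbTE h1) addr_eq0 mulrN => /eqP.
have [l [_ Hl _]] := hcomp_supp Sg_graded c.
have k1' : (k^-1)%g != 1%g by rewrite invg_eq1.
have expS_neq1 (g : G) m : g != 1%g -> (g ^+ m.+1)%g != 1%g.
  by move=> g1; apply/eqP => /(expg_inj G_tf g1 (x1 := m.+1) (x2 := 0%N)).
have neg_comp j m : hcomp ((k^-1) ^+ m.+1)%g c =
    hcomp ((k^-1) ^+ (m.+1 + j))%g c * (- x) ^+ j.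
  elim: j m => [|j IH] m; first by rewrite addn0 expr0 mulr1.
  by rewrite IH E' ?expS_neq1 // -mulrA -exprS -expgSr addnS.
have neg_comp0 m : hcomp ((k^-1) ^+ m.+1)%g c = 0.
  have [j hj] := mul_expg_notin G_tf l ((k^-1) ^+ m.+1)%g k1'.
  by rewrite -expgnDr in hj; rewrite (neg_comp j) (Hl _ hj) mul0r.
have comp1 : hcomp 1%g c = 1.
  by have := E 1%g; rewrite eqxx mul1g -[(k^-1)%g]expg1 (neg_comp0 0%N) mul0r addr0.
have pos_comp m : hcomp (k ^+ m)%g c = (- x) ^+ m.
  elim: m => [|m IH]; first by rewrite expg0 expr0.
  by rewrite E' ?expS_neq1 // expgSr mulgK IH exprSr.
have [m hm] := mul_expg_notin G_tf l 1%g k1.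
exists m; rewrite mul1g in hm; have := pos_comp m; rewrite (Hl _ hm) => /esym e0.
by rewrite -[x]opprK exprNn e0 mulr0.
Qed.

Hypothesis S_artinian : left_artinian S.

(* The chain [S (1 + x)^n] stabilises, so [(1 - c (1 + x)) (1 + x)^N = 0]
   for some [c]. *)
Lemma left_artinian_homog_nilpotent k x : k != 1%g -> Sg k x -> exists m, x ^+ m = 0.
Proof.
move=> k1 hx; set t := 1 + x.
pose I n y := exists s, y = s * t ^+ n.
have HI n : left_ideal_of (fun _ => True) (I n).
  split => //; first by exists 0; rewrite mul0r.
    by move=> a b [s ->] [s' ->]; exists (s - s'); rewrite mulrBl.
  by move=> r a _ [s ->]; exists (r * s); rewrite mulrA.
have Hd n y : I n.+1 y -> I n y by case=> s ->; exists (s * t); rewrite exprS mulrA.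
have [N HN] := S_artinian HI Hd.
have [c ec] : I N.+1 (t ^+ N) by apply/(HN N.+1 (leqnSn N)); exists 1; rewrite mul1r.
have : (1 - c * t) * t ^+ N = 0 by rewrite mulrBl mul1r -mulrA -exprS -ec subrr.
move/(homog_1DX_rreg k1 hx)/eqP; rewrite subr_eq0 => /eqP /esym.
exact: homog_1D_linv_nilpotent k1 hx.
Qed.

Lemma left_artinian_homog_eq0 k X Y : k != 1%g -> Sg k X -> Y * X * X = X -> X = 0.
Proof.
move=> k1 hX e; have [m hm] := left_artinian_homog_nilpotent k1 hX.
have YX_pow n : Y ^+ n.+1 * X ^+ n.+1 = Y * X.
  elim: n => [|n IH]; first by rewrite !expr1.
  rewrite exprSr [X ^+ n.+2]exprS [X ^+ n.+1]exprS -mulrA.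
  by rewrite [Y * (X * _)]mulrA [Y * X * (X * _)]mulrA e -exprS IH.
case: m hm => [|m] hm; first by move/eqP: hm; rewrite expr0 oner_eq0.
by rewrite -e -(YX_pow m) hm mulr0 mul0r.
Qed.

End NilpotentHomogeneous.

(* Newton's iteration [p |-> 3 p^2 - 2 p^3] for idempotents: each step squares
   the defect [p - p^2]. *)
Fixpoint idem_poly (n : nat) : {poly int} :=
  if n is m.+1 then 3%:R * idem_poly m ^+ 2 - 2%:R * idem_poly m ^+ 3 else 'X.

Definition idem_defect : {poly int} := 'X - 'X ^+ 2.

Lemma idem_poly_defect n :
  exists Q, idem_poly n - idem_poly n ^+ 2 = idem_defect ^+ (2 ^ n) * Q.
Proof.
elim: n => [|n [Q HQ]]; first by exists 1; rewrite mulr1 expn0 expr1.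
set p := idem_poly n; exists (Q ^+ 2 * (3%:R + 4%:R * (p - p ^+ 2))).
have -> : idem_poly n.+1 - idem_poly n.+1 ^+ 2 =
    (p - p ^+ 2) ^+ 2 * (3%:R + 4%:R * (p - p ^+ 2)) by rewrite /= -/p; ring.
by rewrite HQ exprMn expnSr exprM mulrA.
Qed.

Lemma idem_poly_congr n : exists W, idem_poly n = 'X - idem_defect * W.
Proof.
elim: n => [|n [W HW]]; first by exists 0; rewrite mulr0 subr0.
have [Q HQ] := idem_poly_defect n; move: HQ HW; set p := idem_poly n => HQ HW.
have e1 : idem_poly n.+1 = p - (p - p ^+ 2) * (1 - 2%:R * p) by rewrite /= -/p; ring.
have e2 : idem_defect ^+ (2 ^ n) = idem_defect * idem_defect ^+ (2 ^ n).-1.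
  by rewrite -exprS prednK // expn_gt0.
exists (W + idem_defect ^+ (2 ^ n).-1 * Q * (1 - 2%:R * p)).
by rewrite e1 HQ e2 {1}HW; ring.
Qed.

Lemma idem_poly_mulX n : exists U, idem_poly n = U * 'X.
Proof.
elim: n => [|n [U HU]]; first by exists 1; rewrite mul1r.
exists ((3%:R - 2%:R * idem_poly n) * idem_poly n * U).
by rewrite /= -[RHS]mulrA -HU; ring.
Qed.

Section ArtinianSubring.
Variables (S : nzRingType) (R : S -> Prop).
Hypothesis R_subring : is_subring R.

Definition nilpotent_set (L : S -> Prop) := exists N, forall xs : seq S, size xs = N ->
  (forall x, x \in xs -> L x) -> \prod_(x <- xs) x = 0.

Lemma nilpotent_setX (L : S -> Prop) x : nilpotent_set L -> L x -> exists n, x ^+ n = 0.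
Proof.
case=> N HN Lx; exists N; rewrite -iter_mulr_1 -(big_nseq _ _ _ _ (fun y => y)).
by apply: HN; [rewrite size_nseq | move=> y /nseqP [-> _]].
Qed.

Section Lifting.
Variable e : S.
Local Notation ev := (horner_morph (fun a => commr_int e a)).

Lemma ev_subring p : R e -> R (ev p).
Proof.
move=> he; elim/poly_ind: p => [|p c IH]; first by rewrite rmorph0; apply: subring0.
rewrite rmorphD rmorphM /= horner_morphX horner_morphC.
by apply: subringD => //; [apply: subringM | apply: subring_int].
Qed.

Lemma idempotent_lift (J : S -> Prop) N :
  (forall r x, R r -> J x -> J (r * x)) -> R e -> J e ->
  (e - e * e) ^+ N = 0 -> (forall n, e ^+ n != 0) ->
  exists f, [/\ J f, f * f = f & f != 0].
Proof.
move=> JM he hJ hN hnil.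
have evZ : ev idem_defect = e - e * e.
  by rewrite /idem_defect rmorphB /= rmorphXn /= horner_morphX expr2.
exists (ev (idem_poly N)); split.
- have [U ->] := idem_poly_mulX N; rewrite rmorphM /= horner_morphX.
  by apply: JM => //; apply: ev_subring.
- apply/eqP; rewrite eq_sym -subr_eq0 -expr2; have [Q HQ] := idem_poly_defect N.
  rewrite -rmorphXn -rmorphB /= HQ rmorphM rmorphXn /= evZ.
  have le : (N <= 2 ^ N)%N by apply/ltnW/ltn_expl.
  by rewrite -(subnKC le) exprD hN !mul0r.
- have [W HW] := idem_poly_congr N.
  have evN : ev (idem_defect * W) ^+ N = 0.
    by rewrite -rmorphXn exprMn rmorphM rmorphXn /= evZ hN mul0r.
  rewrite HW rmorphB /= horner_morphX subr_eq0; apply/eqP => ee.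
  by move: (hnil N); rewrite ee evN eqxx.
Qed.

End Lifting.

Hypothesis R_artinian : left_artinian_on R.

Lemma left_artinian_minimal (F : (S -> Prop) -> Prop) L0 :
  F L0 -> (forall L, F L -> left_ideal_of R L) ->
  exists L, F L /\ forall L', F L' -> (forall x, L' x -> L x) -> forall x, L x -> L' x.
Proof.
move=> FL0 HF; apply: NNPP => Hno.
have step L : exists L', F L -> [/\ F L', (forall x, L' x -> L x) & exists x, L x /\ ~ L' x].
  case: (classic (F L)) => FL; last by exists L.
  have /not_all_ex_not [L' HL'] :
      ~ (forall L', F L' -> (forall x, L' x -> L x) -> forall x, L x -> L' x).
    by move=> H; apply: Hno; exists L.
  exists L' => _; case: (classic (F L')) => FL'; last by exfalso; apply: HL'.
  case: (classic (forall x, L' x -> L x)) => sub; last by exfalso; apply: HL'.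
  split => //; apply: NNPP => hn; apply: HL' => _ _ x Lx.
  by apply: NNPP => nL'; apply: hn; exists x.
have [st Hst] := choice _ step.
pose c n := iter n st L0.
have Fc n : F (c n) by elim: n => [|n IH] //=; have [] := Hst _ IH.
have [N HN] := @R_artinian c (fun n => HF _ (Fc n))
  (fun n x => let: And3 _ h _ := Hst _ (Fc n) in h x).
have [_ _ [x [hx nx]]] := Hst _ (Fc N).
by apply: nx; apply/(HN N.+1 (leqnSn N)).
Qed.

End ArtinianSubring.

Lemma nilpotent_set_prod2 (S : nzRingType) (L : S -> Prop) :
  nilpotent_set (prod2 L L) -> nilpotent_set L.
Proof.
case=> N HN; exists (N + N)%N => xs hs HL; suff [ys [ys_N Hys ->]] : exists ys,
    [/\ size ys = N, forall y, y \in ys -> prod2 L L y & \prod_(x <- xs) x = \prod_(y <- ys) y].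
  exact: HN.
elim: N xs hs HL {HN} => [|N IH] xs; first by rewrite addn0 => /size0nil -> _; exists [::].
case: xs => [|a [|b xs]] /=; rewrite addSn addnS // => -[hs] HL.
have [|ys [ys_N Hys e_prod]] := IH xs hs; first by move=> x hx; apply: HL; rewrite !inE hx !orbT.
exists (a * b :: ys); split; [by rewrite /= ys_N | | by rewrite !big_cons e_prod mulrA].
move=> y; rewrite inE => /orP [/eqP -> | /Hys //].
by apply: prod2_mul; apply: HL; rewrite !inE eqxx ?orbT.
Qed.

Section NonNilpotentIdeal.
Variables (S : nzRingType) (R : S -> Prop).
Hypothesis R_subring : is_subring R.
Hypothesis R_artinian : left_artinian_on R.

Section MinimalNonNilpotent.
Variable J0 : S -> Prop.
Hypotheses (J0_ideal : left_ideal_of R J0) (J0_nnil : ~ nilpotent_set J0)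
  (J0_min : forall L, left_ideal_of R L -> (forall x, L x -> J0 x) -> ~ nilpotent_set L ->
     forall x, J0 x -> L x).

Lemma min_nonnil_sqr x : J0 x -> prod2 J0 J0 x.
Proof.
have [J0R J00 J0B J0M] := J0_ideal.
have sqr_J0 : forall y, prod2 J0 J0 y -> J0 y.
  apply: prod2_ind => // [y z|a b ha hb]; first exact: left_idealD J0_ideal.
  by apply: J0M => //; apply: J0R.
move: x; apply: J0_min => //; last by move/nilpotent_set_prod2.
split; [by move=> y /sqr_J0 /J0R | exact: prod20 | |].
- move=> y z hy hz; apply: prod2D => //; rewrite -mulN1r; apply: prod2_mull => // a ha.
  by apply: J0M => //; apply: subringN R_subring _ (subring1 R_subring).
- by move=> r y hr hy; apply: prod2_mull => // a ha; apply: J0M.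
Qed.

Lemma min_nonnil_mul_neq0 : exists a b, [/\ J0 a, J0 b & a * b != 0].
Proof.
apply: NNPP => H; apply: J0_nnil; exists 2%N => -[|x [|y [|z xs]]] // _ hxs.
rewrite !big_cons big_nil mulr1; apply: NNPP => nz; apply: H; exists x, y.
by split; [apply: hxs; rewrite inE eqxx | apply: hxs; rewrite !inE eqxx orbT | apply/eqP].
Qed.

(* Take [L0] minimal among the left ideals [L] inside [J0] with [J0 L <> 0];
   for [b] in [L0] with [J0 b <> 0], [L0 = J0 b] by [J0 = J0^2]. *)
Lemma min_nonnil_right_unit : exists e b, [/\ J0 e, b != 0 & e * b = b].
Proof.
have [J0R J00 J0B J0M] := J0_ideal.
pose F L := [/\ left_ideal_of R L, forall x, L x -> J0 x &
  exists a b, [/\ J0 a, L b & a * b != 0]].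
have FJ0 : F J0 by split => //; apply: min_nonnil_mul_neq0.
have [L0 [[HL0 L0J0 [a0 [b0 [ha0 hb0 ab0]]]] minL0]] :=
  left_artinian_minimal R_artinian FJ0 (fun L h => let: And3 a _ _ := h in a).
pose L' y := exists z, J0 z /\ y = z * b0.
have HL' : left_ideal_of R L'.
  split.
  - by move=> y [z [hz ->]]; apply: (subringM R_subring); apply: J0R => //; apply: L0J0.
  - by exists 0; rewrite mul0r.
  - by move=> x y [z [hz ->]] [z' [hz' ->]]; exists (z - z'); split; [apply: J0B | rewrite mulrBl].
  - by move=> r x hr [z [hz ->]]; exists (r * z); split; [apply: J0M | rewrite mulrA].
have FL' : F L'.
  split => //; first by move=> y [z [hz ->]]; apply: J0M; [exact: J0R | exact: L0J0].
  have [l [Hl ea]] := min_nonnil_sqr ha0.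
  have nz : \sum_(p <- l) p.1 * (p.2 * b0) != 0.
    suff <- : a0 * b0 = \sum_(p <- l) p.1 * (p.2 * b0) by [].
    by rewrite ea mulr_suml; apply: eq_bigr => p _; rewrite mulrA.
  have /not_all_ex_not [p /(imply_to_and (p \in l)) [pl hp]] :
      ~ (forall p, p \in l -> p.1 * (p.2 * b0) = 0).
    by move=> H; move: nz; rewrite big1_seq ?eqxx // => p /andP [_ /H].
  have [h1 h2] := Hl p pl.
  by exists p.1, (p.2 * b0); split => //; [exists p.2 | apply/eqP].
have L'L0 y : L' y -> L0 y.
  by case=> z [hz ->]; have [_ _ _ L0M] := HL0; apply: L0M => //; apply: J0R.
have [e [he eb]] : L' b0 by apply: minL0.
by exists e, b0; split => //; apply: contra ab0 => /eqP ->; rewrite mulr0.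
Qed.

(* The left annihilator of [b] in [J0] is a proper subideal, hence nilpotent,
   and [e - e^2] lies in it. *)
Lemma min_nonnil_idempotent : exists f, [/\ J0 f, f * f = f & f != 0].
Proof.
have [J0R J00 J0B J0M] := J0_ideal.
have [e [b [he b0 eb]]] := min_nonnil_right_unit.
pose K y := J0 y /\ y * b = 0.
have HK : left_ideal_of R K.
  split; first by move=> y [/J0R].
  - by split; [ | rewrite mul0r].
  - by move=> x y [hx ex] [hy ey]; split; [apply: J0B | rewrite mulrBl ex ey subrr].
  - by move=> r x hr [hx ex]; split; [apply: J0M | rewrite -mulrA ex mulr0].
have nilK : nilpotent_set K.
  apply: NNPP => nK; have [_ ebz] := J0_min HK (fun y hy => proj1 hy) nK he.
  by move: b0; rewrite -eb ebz eqxx.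
have [N hN] : exists N, (e - e * e) ^+ N = 0.
  apply: nilpotent_setX nilK _; split; first by apply: J0B => //; apply: J0M => //; apply: J0R.
  by rewrite mulrBl -mulrA eb eb subrr.
have enil n : e ^+ n != 0.
  have enb : e ^+ n * b = b by elim: n => [|n IH]; rewrite ?expr0 ?mul1r // exprSr -mulrA eb.
  by apply: contra_neq b0 => en; rewrite -enb en mul0r.
exact: (idempotent_lift R_subring J0M (J0R _ he) he hN enil).
Qed.

End MinimalNonNilpotent.

Lemma non_nilpotent_idempotent J : left_ideal_of R J -> ~ nilpotent_set J ->
  exists f, [/\ J f, f * f = f & f != 0].
Proof.
move=> HJ nJ.
pose F L := [/\ left_ideal_of R L, forall x, L x -> J x & ~ nilpotent_set L].
have FJ : F J by split.
have [J0 [[HJ0 J0J nJ0] minJ0]] :=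
  left_artinian_minimal R_artinian FJ (fun L h => let: And3 a _ _ := h in a).
have [|f [Jf ff f0]] := @min_nonnil_idempotent J0 HJ0 nJ0.
  by move=> L HL LJ0 nL; apply: minJ0 => //; split => // x /LJ0 /J0J.
by exists f; split => //; apply: J0J.
Qed.

End NonNilpotentIdeal.

Lemma geometric_sum_mulr (S : nzRingType) (u : S) n :
  (\sum_(i < n) u ^+ i) * (1 - u) = 1 - u ^+ n.
Proof.
elim: n => [|n IH]; first by rewrite big_ord0 mul0r expr0 subrr.
by rewrite big_ord_recr /= mulrDl IH mulrBr mulr1 -exprSr addrA subrK.
Qed.

Definition primitive_idempotent (S : nzRingType) (R : S -> Prop) (e : S) :=
  forall f, R f -> f * f = f -> e * f = f -> f * e = f -> f = 0 \/ f = e.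

Section LocalCorner.
Variables (S : nzRingType) (R : S -> Prop) (e : S).
Hypothesis R_subring : is_subring R.
Hypothesis R_artinian : left_artinian_on R.
Hypotheses (Re : R e) (e_idem : e * e = e) (e_neq0 : e != 0).
Hypothesis e_primitive : primitive_idempotent R e.

Definition corner b := [/\ R b, e * b = b & b * e = b].

Definition corner_linv b := exists w, corner w /\ w * b = e.

Lemma corner0 : corner 0. Proof. by split; rewrite ?mulr0 ?mul0r //; apply: subring0. Qed.

Lemma cornerB x y : corner x -> corner y -> corner (x - y).
Proof.
move=> [h1 h2 h3] [h4 h5 h6].
by split; [apply: subringB | rewrite mulrBr h2 h5 | rewrite mulrBl h3 h6].
Qed.

Lemma cornerD x y : corner x -> corner y -> corner (x + y).
Proof.
by move=> hx hy; rewrite -[y]opprK -[- y]sub0r; do 2!apply: cornerB => //; apply: corner0.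
Qed.

Lemma corner_linv0 : ~ corner_linv 0.
Proof. by move=> [w [_]]; rewrite mulr0 => /esym /eqP; rewrite (negbTE e_neq0). Qed.

Lemma corner_linv_id : corner_linv e.
Proof. by exists e; split => //; split. Qed.

(* If [b] is not nilpotent, [R b] contains a nonzero idempotent [f = r b];
   primitivity forces [e f = e], so [e r e] is a left inverse of [b]. *)
Lemma corner_nilpotent_or_linv b : corner b -> (exists n, b ^+ n = 0) \/ corner_linv b.
Proof.
move=> [Rb eb be].
case: (classic (exists n, b ^+ n = 0)) => [|b_nnil]; [by left | right].
pose J y := exists r, R r /\ y = r * b.
have HJ : left_ideal_of R J.
  split.
  - by move=> y [r [hr ->]]; apply: subringM.
  - by exists 0; split; [apply: subring0 | rewrite mul0r].
  - move=> x y [r [hr ->]] [r' [hr' ->]].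
    by exists (r - r'); split; [apply: subringB | rewrite mulrBl].
  - by move=> r x hr [r' [hr' ->]]; exists (r * r'); split; [apply: subringM | rewrite mulrA].
have nJ : ~ nilpotent_set J.
  move=> /nilpotent_setX Jnil; apply: b_nnil; apply: Jnil.
  by exists 1; rewrite mul1r; split => //; apply: subring1.
have [f [[r [hr ef]] ff f0]] := non_nilpotent_idempotent R_subring R_artinian HJ nJ.
have fe : f * e = f by rewrite ef -mulrA be.
pose g := e * f.
have Rg : R g by apply: subringM => //; rewrite ef; apply: subringM.
have gg : g * g = g by rewrite /g -mulrA [f * (e * f)]mulrA fe ff.
have eg : e * g = g by rewrite /g mulrA e_idem.
have ge : g * e = g by rewrite /g -mulrA fe.
have g0 : g != 0 by apply: contra_neq f0 => g0; rewrite -ff -{1}fe -mulrA -/g g0 mulr0.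
case: (e_primitive Rg gg eg ge) => [gz|gE]; first by move: g0; rewrite gz eqxx.
exists (e * r * e); split; last by rewrite -mulrA eb -mulrA -ef.
by split; [apply: (subringM R_subring) => //; apply: (subringM R_subring) | rewrite !mulrA e_idem | rewrite -mulrA e_idem].
Qed.

(* [eRe] is local: if [w (b1 - b2) = e], then [w b1] is not left invertible,
   so it is nilpotent and [e - w b1 = - w b2] is left invertible. *)
Lemma corner_nlinvB b1 b2 : corner b1 -> corner b2 ->
  ~ corner_linv b1 -> ~ corner_linv b2 -> ~ corner_linv (b1 - b2).
Proof.
move=> hb1 hb2 n1 n2 [w [hw e_w]].
have [Rw ew we] := hw; have [Rb1 eb1 b1e] := hb1.
pose u := w * b1.
have hu : corner u by split; [apply: subringM | rewrite /u mulrA ew | rewrite /u -mulrA b1e].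
have nu : ~ corner_linv u.
  move=> [v [[Rv ev ve] e_v]]; apply: n1; exists (v * w); split; last by rewrite -mulrA.
  by split; [apply: subringM | rewrite mulrA ev | rewrite -mulrA we].
have [[n hn]|//] := corner_nilpotent_or_linv hu.
have [Ru eu ue] := hu.
pose s := \sum_(i < n) u ^+ i.
have Rs : R s.
  apply: big_ind => //; [exact: subring0 | exact: subringD | move=> i _].
  by elim: (nat_of_ord i) => [|k IH]; rewrite ?expr0 ?exprS; [apply: subring1 | apply: subringM].
have hs : s * (1 - u) = 1 by rewrite geometric_sum_mulr hn subr0.
have wb2 : w * b2 = u - e.
  by move/eqP: e_w; rewrite mulrBr subr_eq addrC -subr_eq => /eqP <-.
apply: n2; exists (- (e * s * e) * w); split.
  split; last by rewrite -[_ * w * e]mulrA we.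
    have Ress : R (e * s * e) by do 2!apply: (subringM R_subring) => //.
    by apply: (subringM R_subring) => //; apply: subringN.
  by rewrite mulNr mulrN !mulrA e_idem.
rewrite -[_ * w * b2]mulrA wb2 mulNr -mulrN opprB.
have e1 : e - u = (1 - u) * e by rewrite mulrBl mul1r ue.
have e2 : e * (e - u) = e - u by rewrite mulrBr e_idem eu.
by rewrite -[_ * _ * (e - u)]mulrA e2 e1 mulrA -[e * s * (1 - u)]mulrA hs mulr1 e_idem.
Qed.

Lemma corner_nlinvD b1 b2 : corner b1 -> corner b2 ->
  ~ corner_linv b1 -> ~ corner_linv b2 -> ~ corner_linv (b1 + b2).
Proof.
move=> h1 h2 n1 n2; rewrite -[b2]opprK -[- b2]sub0r; apply: corner_nlinvB => //.
  by apply: cornerB => //; apply: corner0.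
by apply: corner_nlinvB => //; [apply: corner0 | apply: corner_linv0].
Qed.

Lemma corner_nlinv_sum (I : eqType) (l : seq I) (F : I -> S) :
  (forall i, i \in l -> corner (F i) /\ ~ corner_linv (F i)) ->
  corner (\sum_(i <- l) F i) /\ ~ corner_linv (\sum_(i <- l) F i).
Proof.
elim: l => [|a l IH] H; first by rewrite big_nil; split; [apply: corner0 | apply: corner_linv0].
have [ha na] := H a (mem_head _ _).
have [hl nl] := IH (fun i hi => H i (introT orP (or_intror hi))).
by rewrite big_cons; split; [apply: cornerD | apply: corner_nlinvD].
Qed.

End LocalCorner.

Lemma fresh_sequence (T : eqType) (P : T -> Prop) :
  (forall l : seq T, exists x, x \notin l /\ P x) ->
  exists f : nat -> T, injective f /\ forall n, P (f n).
Proof.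
move=> fresh; have [pick Hpick] := choice _ fresh.
pose pre n := iter n (fun l => rcons l (pick l)) [::].
pose f n := pick (pre n).
have f_mem n i : (i < n)%N -> f i \in pre n.
  elim: n => [|n IH] //=; rewrite ltnS leq_eqVlt mem_rcons inE => /orP [/eqP ->|/IH ->].
    by rewrite eqxx.
  by rewrite orbT.
have f_neq n i : (i < n)%N -> f n != f i.
  by move=> lt; apply: contraNneq (Hpick (pre n)).1 => e; rewrite -/(f n) e f_mem.
exists f; split => [m n e|n]; last exact: (Hpick _).2.
by case: (ltngtP m n) => // [/f_neq|/f_neq]; rewrite e eqxx.
Qed.

Section FiniteSupportOfArtinian.
Variables (G : groupType) (S : nzRingType) (Sg : G -> S -> Prop).
Hypotheses (Sg_eps : epsilon_strongly_graded Sg) (G_tf : torsion_free G).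
Hypothesis S_artinian : left_artinian S.
Let Sg_graded := eps_graded Sg_eps.
Let R_subring := Sg1_subring Sg_graded.
Let R_artinian := left_artinian_principal Sg_graded S_artinian.
Local Notation R := (Sg 1%g).
Local Notation eps' h := (eps Sg_eps (h^-1)%g).

Definition infinite_eps_support (e : S) :=
  forall l : seq G, exists h, h \notin l /\ eps' h * e != 0.

Lemma infinite_eps_support1 : ~ finite_support Sg -> infinite_eps_support 1.
Proof.
move=> nfs l; apply: NNPP => H; apply: nfs; exists l => g [x [hx nx]].
apply: NNPP => gl; apply: H; exists g; split; first by apply/negP.
by rewrite mulr1; apply/eqP; exact: eps_neq0 hx nx.
Qed.

Lemma infinite_eps_supportD f g : infinite_eps_support (f + g) ->
  infinite_eps_support f \/ infinite_eps_support g.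
Proof.
move=> Hfg; apply: NNPP => /not_or_and [].
move=> /not_all_ex_not [lf /not_ex_all_not Hf] /not_all_ex_not [lg /not_ex_all_not Hg].
have [h [hl he]] := Hfg (lf ++ lg); move: hl; rewrite mem_cat negb_or => /andP [hf hg].
have Ef : eps' h * f = 0 by apply: NNPP => nz; apply: (Hf h); split => //; apply/eqP.
have Eg : eps' h * g = 0 by apply: NNPP => nz; apply: (Hg h); split => //; apply/eqP.
by move: he; rewrite mulrDr Ef Eg addr0 eqxx.
Qed.

Lemma exists_minimal_idempotent : infinite_eps_support 1 ->
  exists e, [/\ R e, e * e = e, e != 0, infinite_eps_support e &
    forall p, R p -> p * p = p -> p * e = p -> infinite_eps_support p ->
      exists r, R r /\ e = r * p].
Proof.
move=> inf1.
pose F L := exists e, [/\ R e, e * e = e, e != 0,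
  forall y, L y <-> exists r, R r /\ y = r * e & infinite_eps_support e].
have HF L : F L -> left_ideal_of R L.
  move=> [e [Re ee e0 HL _]]; split.
  - by move=> y /HL [r [hr ->]]; apply: (subringM R_subring).
  - by apply/HL; exists 0; split; [apply: (subring0 R_subring) | rewrite mul0r].
  - move=> x y /HL [r [hr ->]] /HL [r' [hr' ->]]; apply/HL.
    by exists (r - r'); split; [apply: subringB | rewrite mulrBl].
  - move=> r x hr /HL [r' [hr' ->]]; apply/HL.
    by exists (r * r'); split; [apply: subringM | rewrite mulrA].
have F1 : F (fun y => exists r, R r /\ y = r * 1).
  exists 1; split => //; [exact: (subring1 R_subring) | exact: mulr1 | exact: oner_neq0].
have [L0 [[e [Re ee e0 HL0 infe]] minL]] := left_artinian_minimal R_artinian F1 HF.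
exists e; split => // p Rp pp pe infp.
have p0 : p != 0 by apply/eqP => p0; have [h [_]] := infp [::]; rewrite p0 mulr0 eqxx.
have Fp : F (fun y => exists r, R r /\ y = r * p) by exists p; split.
have /HL0 eL0 : exists r, R r /\ e = r * e by exists 1; split; [apply: (subring1 R_subring) | rewrite mul1r].
apply: minL Fp _ _ eL0 => x [r [hr ->]]; apply/HL0.
by exists (r * p); split; [apply: subringM | rewrite -mulrA pe].
Qed.

(* If [f] were a proper idempotent of [eRe], one of [f], [e - f] would have
   infinite [eps]-support and would generate a smaller left ideal. *)
Lemma minimal_idempotent_primitive e : R e -> e * e = e ->
  infinite_eps_support e ->
  (forall p, R p -> p * p = p -> p * e = p -> infinite_eps_support p ->
     exists r, R r /\ e = r * p) ->
  primitive_idempotent R e.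
Proof.
move=> Re ee infe mine f Rf ff ef fe; apply: NNPP => /not_or_and [f0 fe0].
pose g := e - f.
have Rg : R g by apply: subringB.
have gg : g * g = g by rewrite /g mulrBr !mulrBl ee ef fe ff subrr subr0.
have ge : g * e = g by rewrite /g mulrBl ee fe.
have g0 : g != 0 by rewrite /g subr_eq0; apply/eqP => e_f; apply: fe0.
have fg : f * g = 0 by rewrite /g mulrBr fe ff subrr.
have gf : g * f = 0 by rewrite /g mulrBl ef ff subrr.
have eg : e * g = g by rewrite /g mulrBr ee ef.
have orth p q : R p -> p * p = p -> p * e = p -> infinite_eps_support p ->
    e * q = q -> p * q = 0 -> q = 0.
  move=> Rp pp pe infp eq pq; have [r [hr er]] := mine p Rp pp pe infp.
  by rewrite -eq er -mulrA pq mulr0.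
have := infe; rewrite -(subrK f e) -/g => /infinite_eps_supportD [infg|inff].
  by apply: f0; apply: (orth g) => //.
by move: g0; rewrite (orth f g) ?eqxx.
Qed.

Lemma eps_mul_primitive e h : R e -> e * e = e -> primitive_idempotent R e ->
  eps' h * e != 0 -> eps' h * e = e.
Proof.
move=> Re ee prim he.
have Reps := eps_Sg1 Sg_eps (h^-1)%g.
have ce := eps_central Sg_eps (h^-1)%g Re.
have [||||/eqP|//] := prim (eps' h * e); last by rewrite (negbTE he).
- exact: (subringM R_subring).
- by rewrite -mulrA [e * (_ * e)]mulrA ce -[_ * e * e]mulrA ee mulrA eps_idem.
- by rewrite mulrA ce -mulrA ee.
- by rewrite -mulrA ee.
Qed.

Lemma corner_homog e h y r x : R e -> e * e = e -> Sg (h^-1)%g y -> R r -> Sg h x ->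
  corner R e (e * y * r * x * e).
Proof.
move=> Re ee hy hr hx; split; [|by rewrite !mulrA ee | by rewrite -mulrA ee].
have -> : e * y * r * x * e = e * (y * r * x) * e by rewrite !mulrA.
apply: (subringM R_subring) => //; apply: (subringM R_subring) => //.
by rewrite -(mulVg h); apply: SgM => //; rewrite -[(h^-1)%g]mulg1; apply: SgM.
Qed.

Definition corner_factor (e : S) (h : G) (p : S * S) :=
  [/\ Sg h p.1, Sg (h^-1)%g p.2, p.1 * e = p.1, e * p.2 = p.2 & p.2 * p.1 = e].

(* Writing [eps' h] as [sum a_i b_i], [e = sum e a_i b_i e] is a sum in the
   local ring [eRe], so some [e a_i b_i e] is left invertible there. *)
Lemma exists_corner_factor e h : R e -> e * e = e -> e != 0 ->
  primitive_idempotent R e -> eps' h * e = e -> exists p, corner_factor e h p.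
Proof.
move=> Re ee e0 prim E.
have [l [Hl el]] := eps_decomp Sg_eps (h^-1)%g.
pose Fp (p : S * S) := e * p.1 * 1 * p.2 * e.
have HB p : p \in l -> corner R e (Fp p).
  move=> pl; have [h1 h2] := Hl p pl; rewrite invgK in h2.
  exact: corner_homog Re ee h1 (subring1 R_subring) h2.
have esum : e = \sum_(p <- l) Fp p.
  rewrite -{1}ee -{2}E el mulrA mulr_sumr mulr_suml; apply: eq_bigr => p _.
  by rewrite /Fp mulr1 !mulrA.
have /not_all_ex_not [p /(imply_to_and (p \in l)) [pl /NNPP [w [[Rw ew we] ewF]]]] :
    ~ (forall p, p \in l -> ~ corner_linv R e (Fp p)).
  move=> H; have [_ []] := corner_nlinv_sum R_subring R_artinian Re ee e0 prim
    (fun p pl => conj (HB p pl) (H p pl)).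
  by rewrite -esum; exact: corner_linv_id Re ee.
have [h1 h2] := Hl p pl; rewrite invgK in h2.
exists (p.2 * e, w * p.1); split => /=.
- by rewrite -[h]mulg1; apply: SgM => //.
- by rewrite -[(h^-1)%g]mul1g; apply: SgM.
- by rewrite -mulrA ee.
- by rewrite mulrA ew.
- by rewrite -[RHS]ewF /Fp mulr1 -{1}we !mulrA.
Qed.

Section CornerFactors.
Variable e : S.
Hypotheses (Re : R e) (ee : e * e = e) (e0 : e != 0).
Hypothesis prim : primitive_idempotent R e.

(* If [e y (p1 p2) x e] had a left inverse [w] in [eRe], then [X = p2 x e],
   homogeneous of degree [h^-1 k <> 1], would satisfy [Y X X = X] for
   [Y = w e y p1], hence vanish by torsion-freeness. *)
Lemma corner_factor_nlinv h k p y x : corner_factor e h p -> k != h ->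
  Sg (k^-1)%g y -> Sg k x -> ~ corner_linv R e (e * y * (p.1 * p.2) * x * e).
Proof.
move=> [hp1 hp2 p1e ep2 p21] hk hy hx [w [[Rw ew we] ewy]].
pose X := p.2 * x * e; pose Y := w * e * y * p.1.
have YX : Y * X = e by rewrite -ewy /Y /X !mulrA.
have eX : e * X = X by rewrite /X !mulrA ep2.
have k1 : (h^-1 * k)%g != 1%g by rewrite -(inj_eq (mulgI h)) mulVKg mulg1.
have hX : Sg (h^-1 * k)%g X.
  by rewrite -[(h^-1 * k)%g]mulg1; apply: SgM => //; apply: SgM.
have X0 : X = 0 by apply: (left_artinian_homog_eq0 Sg_graded G_tf S_artinian k1 hX (Y := Y)); rewrite YX eX.
by move: e0; rewrite -YX X0 mulr0 eqxx.
Qed.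

Lemma no_infinite_corner_factors (hn : nat -> G) (pn : nat -> S * S) :
  injective hn -> (forall n, corner_factor e (hn n) (pn n)) -> False.
Proof.
move=> hn_inj Hpn.
pose I n r := R r /\ forall i, (i < n)%N -> forall y x, Sg ((hn i)^-1)%g y -> Sg (hn i) x ->
  ~ corner_linv R e (e * y * r * x * e).
have HI n : left_ideal_of R (I n).
  split; first by move=> r [].
  - split; first exact: (subring0 R_subring).
    by move=> i _ y x _ _; rewrite mulr0 !mul0r; apply: corner_linv0.
  - move=> r r' [hr Hr] [hr' Hr']; split; first exact: (subringB R_subring).
    move=> i hi y x hy hx; rewrite mulrBr !mulrBl.
    have c r0 : R r0 -> corner R e (e * y * r0 * x * e) by move=> hr0; exact: corner_homog Re ee hy hr0 hx.
    by apply: (corner_nlinvB R_subring R_artinian Re ee prim); [exact: c | exact: c | exact: Hr i hi y x hy hx | exact: Hr' i hi y x hy hx].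
  - move=> r' r hr' [hr Hr]; split; first exact: (subringM R_subring).
    move=> i hi y x hy hx; have -> : e * y * (r' * r) = e * (y * r') * r by rewrite !mulrA.
    by apply: (Hr i hi _ x) => //; rewrite -[X in Sg X _]mulg1; apply: SgM.
have Hd n x : I n.+1 x -> I n x by case=> hx H; split => // i hi; apply/H/ltnW.
have [N HN] := R_artinian HI Hd.
have [hp1 hp2 _ _ p21] := Hpn N.
have RN : R ((pn N).1 * (pn N).2) by rewrite -(mulgV (hn N)); apply: SgM.
have IN : I N ((pn N).1 * (pn N).2).
  split => // i hi y x hy hx; apply: (corner_factor_nlinv (Hpn N) _ hy hx).
  by rewrite (inj_eq hn_inj) neq_ltn hi.
have [_ /(_ N (ltnSn N) _ _ hp2 hp1) []] := proj2 (HN N.+1 (leqnSn N) _) IN.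
set p := pn N; have -> : e * p.2 * (p.1 * p.2) * p.1 * e = e * (p.2 * p.1) * (p.2 * p.1) * e.
  by rewrite !mulrA.
by rewrite p21 !ee; apply: corner_linv_id Re ee.
Qed.

End CornerFactors.

Lemma finite_support_of_left_artinian : finite_support Sg.
Proof.
apply: NNPP => /infinite_eps_support1 /exists_minimal_idempotent [e [Re ee e0 infe mine]].
have prim := minimal_idempotent_primitive Re ee infe mine.
have [hn [hn_inj Hhn]] := fresh_sequence infe.
have [pn Hpn] : exists pn : nat -> S * S, forall n, corner_factor e (hn n) (pn n).
  apply: (choice (fun n => corner_factor e (hn n))) => n.
  by apply: exists_corner_factor => //; apply: eps_mul_primitive.
exact: (no_infinite_corner_factors Re ee e0 prim hn_inj Hpn).
Qed.

End FiniteSupportOfArtinian.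

Lemma left_artinian_graded (G : groupType) (S : nzRingType) (Sg : G -> S -> Prop) :
  torsion_free G -> epsilon_strongly_graded Sg ->
  (left_artinian S <-> left_artinian_on (Sg 1%g) /\ finite_support Sg).
Proof.
move=> G_tf Sg_eps; split => [S_art|[]].
  split; first exact: left_artinian_principal (eps_graded Sg_eps) S_art.
  exact: finite_support_of_left_artinian.
exact: left_artinian_of_finite_support.
Qed.

Section Converse.
Variable S : nzRingType.

Lemma conv_mulE (x y : S^c) : x * y = (y : S) * (x : S).
Proof. by []. Qed.

Lemma prod2_conv (A B : S -> Prop) x : prod2 (S := S^c) A B x <-> prod2 B A x.
Proof.
split=> [[l [H e]] | [l [H e]]].
  exists [seq (p.2, p.1) | p <- l]; split; last by rewrite e big_map.
  by move=> p /mapP [q ql ->] /=; have [] := H q ql.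
exists [seq ((p.2, p.1) : S^c * S^c) | p <- l]; split; last by rewrite e big_map.
by move=> p /mapP [q ql ->] /=; have [] := H q ql.
Qed.

Lemma prod3_conv (A B C : S -> Prop) x : prod3 (S := S^c) A B C x <-> prod3 C B A x.
Proof.
split=> [[l [H e]] | [l [H e]]].
  exists [seq ((p.2, p.1.2), p.1.1) | p <- l]; split.
    by move=> p /mapP [q ql ->] /=; have [] := H q ql.
  by rewrite e big_map; apply: eq_bigr => p _ /=; rewrite !conv_mulE mulrA.
exists [seq (((p.2, p.1.2), p.1.1) : S^c * S^c * S^c) | p <- l]; split.
  by move=> p /mapP [q ql ->] /=; have [] := H q ql.
by rewrite e big_map; apply: eq_bigr => p _ /=; rewrite !conv_mulE mulrA.
Qed.

End Converse.

Section ConverseGrading.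
Variables (G : groupType) (S : nzRingType) (Sg : G -> S -> Prop).
Hypothesis Sg_eps : epsilon_strongly_graded Sg.
Let Sg_graded := eps_graded Sg_eps.

(* [S^c] is graded by [g |-> S_(g^-1)], since [(S^c)_g (S^c)_h = S_(h^-1) S_(g^-1)]. *)
Definition conv_grading (g : G) (x : S^c) : Prop := Sg (g^-1)%g x.

Lemma conv_grading_graded : graded conv_grading.
Proof.
have inv_uniq (l : seq G) : uniq [seq (g^-1)%g | g <- l] = uniq l by apply/map_inj_uniq/invg_inj.
split.
- by move=> g; split => [|x y]; [exact: (Sg0 Sg_graded) | exact: (SgB Sg_graded)].
- split.
  + move=> x; have [[l f] [ul Hf ex]] := graded_decomp Sg_graded x.
    exists [seq (g^-1)%g | g <- l], (fun g => f (g^-1)%g).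
    split=> [|g|]; [by rewrite inv_uniq | exact: Hf | rewrite big_map ex].
    by under eq_bigr do rewrite invgK.
  + move=> l f ul Hf e g gl; rewrite -[g]invgK.
    apply: (graded_indep Sg_graded (l := [seq (g^-1)%g | g <- l]) (f := fun h => f (h^-1)%g)); last exact: map_f.
    * by rewrite inv_uniq.
    * by move=> h /mapP [k kl ->]; rewrite invgK; apply: Hf.
    * by rewrite big_map; under eq_bigr do rewrite invgK.
- by move=> g h x y hx hy; rewrite /conv_grading invgM conv_mulE; apply: (SgM Sg_graded).
Qed.

Lemma conv_grading_eps : epsilon_strongly_graded conv_grading.
Proof.
split; first exact: conv_grading_graded.
move=> g; split; first by move=> x; rewrite prod3_conv; exact: (proj1 (proj2 Sg_eps (g^-1)%g) x).
have [u [hu Hu]] := proj2 (proj2 Sg_eps g).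
exists u; split; first by apply/prod2_conv; rewrite /conv_grading invgK.
by move=> x; rewrite prod2_conv /conv_grading invgK => /Hu [h1 h2].
Qed.

Lemma finite_support_conv : finite_support conv_grading <-> finite_support Sg.
Proof.
split=> [[l Hl] | [l Hl]].
  exists [seq (g^-1)%g | g <- l] => g [x [hx nx]].
  by rewrite -[g]invgK; apply: map_f; apply: Hl; exists x; rewrite /conv_grading invgK.
exists [seq (g^-1)%g | g <- l] => g [x [hx nx]].
by rewrite -[g]invgK; apply: map_f; apply: Hl; exists x.
Qed.

End ConverseGrading.

Theorem theorem1p2 (G : groupType) (S : nzRingType) (Sg : G -> S -> Prop) :
  torsion_free G -> epsilon_strongly_graded Sg ->
  (left_artinian S <-> left_artinian_on (Sg 1%g) /\ finite_support Sg) /\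
  (right_artinian S <-> right_artinian_on (Sg 1%g) /\ finite_support Sg).
Proof.
move=> G_tf Sg_eps; split; first exact: left_artinian_graded.
have := left_artinian_graded G_tf (conv_grading_eps Sg_eps).
by rewrite finite_support_conv /conv_grading invg1.
Qed.
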